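(* Let $a_1\ge a_2\ge\dots\ge a_n\ge0$, let $\delta\in(2/n,1]$ be such that $1/\delta$ is an integer, and let $\delta_1,\dots,\delta_n$ be independent random variables with $\mathbb P(\delta_j=1)=\delta$, $\mathbb P(\delta_j=0)=1-\delta$. Put $n(\delta)=e+\sum_{j=1}^n\delta_j$. Then $$\frac{\delta}{4e}\sqrt{\log(\delta n)}\sum_{j=1}^{1/\delta}a_j\ \le\ \mathbb E\Bigl(\sqrt{\log n(\delta)}\cdot\max_{1\le j\le n}\delta_ja_j\Bigr)\ \le\ 4\delta\sqrt{\log(\delta n)}\sum_{j=1}^{1/\delta}a_j.$$
   Context: $\log$ is the natural logarithm and $e$ is Euler's number. *)

From HB Require Import structures.
From mathcomp Require Import all_boot all_order all_algebra.
From mathcomp Require Import all_classical all_reals all_analysis.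
Set Implicit Arguments. Unset Strict Implicit. Unset Printing Implicit Defensive.
Import Order.TTheory GRing.Theory Num.Theory.
Local Open Scope ring_scope.

(* Sample space for n independent Bernoulli(d) variables delta_1..delta_n:
   outcomes w : {ffun 'I_n -> bool}, delta_{j+1}(w) = w j (as 0/1),
   with the product (independent) law. *)
Definition bern_prob {R : realType} (n : nat) (d : R) (w : {ffun 'I_n -> bool}) : R :=
  \prod_(j < n) (if w j then d else 1 - d).

Definition bern_expect {R : realType} (n : nat) (d : R)
  (X : {ffun 'I_n -> bool} -> R) : R :=
  \sum_(w : {ffun 'I_n -> bool}) bern_prob d w * X w.

Definition delta_rv {R : realType} (n : nat) (w : {ffun 'I_n -> bool}) (j : 'I_n) : R :=
  (w j)%:R.

(* Since a is nonincreasing, max_j δ_j a_j is the a_j of the first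
   success, so conditioning on that index gives
     E = Σ_j δ (1-δ)^(j-1) a_j G_(n-j),   G_k := E sqrt(ln(e + 1 + N_k)),  N_k ~ Bin(k, δ).
   Concavity of sqrt ∘ ln (Jensen) gives G_k <= sqrt(ln(e + 1 + δ k)) <= 2 sqrt(ln(δ n)), and
   since (1-δ)^(1/δ) <= 1/2 the weights (1-δ)^(j-1) sum the a_j to at most twice
   Σ_(j <= 1/δ) a_j.  Conversely, for j <= 1/δ we have (1-δ)^(j-1) >= 1/e, and a Chernoff bound
   on E e^(-N_k) shows that N_k >= δk/4 often enough that G_k >= sqrt(ln(δ n))/4. *)
From HB Require Import structures.
From mathcomp Require Import all_boot all_order all_algebra.
From mathcomp Require Import all_classical all_reals all_analysis.
From mathcomp Require Import ring lra zify.
Import Order.TTheory GRing.Theory Num.Theory.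
Set Implicit Arguments. Unset Strict Implicit. Unset Printing Implicit Defensive.
Local Open Scope ring_scope.

Definition ffcons n (b : bool) (f : {ffun 'I_n -> bool}) : {ffun 'I_n.+1 -> bool} :=
  [ffun i => if unlift ord0 i is Some j then f j else b].

Lemma ffcons0 n b (f : {ffun 'I_n -> bool}) : ffcons b f ord0 = b.
Proof. by rewrite ffunE unlift_none. Qed.

Lemma ffconsS n b (f : {ffun 'I_n -> bool}) j : ffcons b f (lift ord0 j) = f j.
Proof. by rewrite ffunE liftK. Qed.

Lemma ffcons_bij n : bijective (fun p : bool * {ffun 'I_n -> bool} => ffcons p.1 p.2).
Proof.
exists (fun w : {ffun 'I_n.+1 -> bool} => (w ord0, [ffun j => w (lift ord0 j)])).
- case=> b f /=; rewrite ffcons0; congr (_, _).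
  by apply/ffunP => j; rewrite ffunE ffconsS.
- move=> w /=; apply/ffunP => i; rewrite ffunE.
  by case: unliftP => [j ->|->]; rewrite ?ffunE.
Qed.

Lemma big_ord_split_nat (V : nmodType) n m (F : nat -> V) : (m <= n)%N ->
  \sum_(j < n) F j = \sum_(j < m) F j + \sum_(m <= j < n) F j.
Proof. by move=> mn; rewrite -!(big_mkord xpredT) (big_cat_nat (leq0n m) mn). Qed.

Section BernoulliExpectation.
Variables (R : realType) (d : R).

Lemma bern_prob_cons n b (f : {ffun 'I_n -> bool}) :
  bern_prob d (ffcons b f) = (if b then d else 1 - d) * bern_prob d f.
Proof.
rewrite /bern_prob big_ord_recl ffcons0; congr (_ * _).
by apply: eq_bigr => j _; rewrite ffconsS.
Qed.

Lemma bern_expect_cons n (X : {ffun 'I_n.+1 -> bool} -> R) :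
  bern_expect d X = d * bern_expect d (fun f => X (ffcons true f)) +
                    (1 - d) * bern_expect d (fun f => X (ffcons false f)).
Proof.
rewrite /bern_expect (reindex _ (onW_bij _ (ffcons_bij n))) /=.
rewrite -(pair_big xpredT xpredT (fun b f => bern_prob d (ffcons b f) * X (ffcons b f))).
rewrite big_bool /= !mulr_sumr.
by congr (_ + _); apply: eq_bigr => f _; rewrite bern_prob_cons mulrA.
Qed.

Lemma eq_bern_expect n (X Y : {ffun 'I_n -> bool} -> R) :
  X =1 Y -> bern_expect d X = bern_expect d Y.
Proof. by move=> eXY; apply: eq_bigr => w _; rewrite eXY. Qed.

Lemma bern_expectD n (X Y : {ffun 'I_n -> bool} -> R) :
  bern_expect d (fun w => X w + Y w) = bern_expect d X + bern_expect d Y.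
Proof. by rewrite /bern_expect -big_split; apply: eq_bigr => w _; rewrite mulrDr. Qed.

Lemma bern_expectZ n k (X : {ffun 'I_n -> bool} -> R) :
  bern_expect d (fun w => k * X w) = k * bern_expect d X.
Proof. by rewrite /bern_expect mulr_sumr; apply: eq_bigr => w _; rewrite mulrCA. Qed.

Lemma bern_expect_cst n k : bern_expect (n := n) d (fun _ => k) = k.
Proof.
elim: n => [|n IHn]; last by rewrite bern_expect_cons !IHn; ring.
rewrite /bern_expect (eq_bigr (fun _ => k)); last by move=> w _; rewrite /bern_prob big_ord0 mul1r.
by rewrite sumr_const card_ffun !card_ord expn0 mulr1n.
Qed.

Hypotheses (d_ge0 : 0 <= d) (d_le1 : d <= 1).

Lemma bern_prob_ge0 n (w : {ffun 'I_n -> bool}) : 0 <= bern_prob d w.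
Proof. by apply: prodr_ge0 => j _; case: (w j); rewrite ?subr_ge0. Qed.

Lemma ler_bern_expect n (X Y : {ffun 'I_n -> bool} -> R) :
  (forall w, X w <= Y w) -> bern_expect d X <= bern_expect d Y.
Proof. by move=> leXY; apply: ler_sum => w _; rewrite ler_wpM2l ?bern_prob_ge0. Qed.

End BernoulliExpectation.
Arguments eq_bern_expect {R d n} X Y.

Section SuccessCount.
Variable R : realType.

Definition bern_count n (w : {ffun 'I_n -> bool}) : R := \sum_(j < n) delta_rv w j.

Lemma bern_count_cons n b (f : {ffun 'I_n -> bool}) :
  bern_count (ffcons b f) = b%:R + bern_count f.
Proof.
rewrite /bern_count big_ord_recl /delta_rv ffcons0; congr (_ + _).
by apply: eq_bigr => j _; rewrite ffconsS.
Qed.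

Lemma bern_count_ge0 n (w : {ffun 'I_n -> bool}) : 0 <= bern_count w.
Proof. by apply: sumr_ge0 => j _; rewrite ler0n. Qed.

Lemma bern_count0 (w : {ffun 'I_0 -> bool}) : bern_count w = 0.
Proof. exact: big_ord0. Qed.

Lemma bern_expect_count n (d : R) : bern_expect d (@bern_count n) = d * n%:R.
Proof.
elim: n => [|n IHn].
  by rewrite (eq_bern_expect _ (fun _ => 0) bern_count0) bern_expect_cst mulr0.
rewrite bern_expect_cons.
rewrite (eq_bern_expect _ (fun f => 1 + bern_count f) (fun f => bern_count_cons true f)).
rewrite (eq_bern_expect (fun f => bern_count (ffcons false f)) (@bern_count n));
  last by move=> f; rewrite bern_count_cons add0r.
by rewrite bern_expectD bern_expect_cst IHn -natr1; ring.
Qed.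

Lemma bern_expect_expNcount n (d : R) :
  bern_expect d (fun w => expR (- @bern_count n w)) = (1 - d + d * expR (-1)) ^+ n.
Proof.
elim: n => [|n IHn].
  rewrite (eq_bern_expect _ (fun _ => 1)); first by rewrite bern_expect_cst.
  by move=> w; rewrite bern_count0 oppr0 expR0.
rewrite bern_expect_cons.
rewrite (eq_bern_expect _ (fun f => expR (-1) * expR (- bern_count f)));
  last by move=> f; rewrite bern_count_cons opprD expRD.
rewrite (eq_bern_expect (fun f => expR (- bern_count (ffcons false f)))
                        (fun f => expR (- bern_count f)));
  last by move=> f; rewrite bern_count_cons add0r.
by rewrite bern_expectZ IHn exprS; ring.
Qed.

End SuccessCount.

Section FirstSuccessDecomposition.
Variable R : realType.
Implicit Types (a : nat -> R) (c d : R).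

Definition nonincreasing_nonneg n a :=
  (forall j k, (1 <= j)%N -> (j <= k)%N -> (k <= n)%N -> a k <= a j) /\ 0 <= a n.

Definition weighted_max n a (w : {ffun 'I_n -> bool}) :=
  \big[Num.max/0]_(j < n) (delta_rv w j * a j.+1).

Definition sqrtln_moment n d c :=
  bern_expect (n := n) d (fun w => Num.sqrt (ln (c + bern_count R w))).

Definition sqrtln_max_moment n d c a :=
  bern_expect (n := n) d (fun w => Num.sqrt (ln (c + bern_count R w)) * weighted_max a w).

Lemma nonincreasing_nonneg_ge0 n a j :
  nonincreasing_nonneg n a -> (1 <= j)%N -> (j <= n)%N -> 0 <= a j.
Proof. by move=> [a_dec a_n0] j1 jn; apply: le_trans a_n0 (a_dec _ _ j1 jn (leqnn n)). Qed.

Lemma nonincreasing_nonneg_shift n a :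
  nonincreasing_nonneg n.+1 a -> nonincreasing_nonneg n (fun k => a k.+1).
Proof. by move=> [a_dec a_n0]; split=> // j k j1 jk kn; apply: a_dec. Qed.

Lemma weighted_max_cons n a b (f : {ffun 'I_n -> bool}) :
  weighted_max a (ffcons b f) = Num.max (b%:R * a 1%N) (weighted_max (fun k => a k.+1) f).
Proof.
rewrite /weighted_max big_ord_recl /delta_rv ffcons0; congr (Num.max _ _).
by apply: eq_bigr => j _; rewrite ffconsS lift0.
Qed.

Lemma weighted_max_ge0 n a (w : {ffun 'I_n -> bool}) :
  nonincreasing_nonneg n a -> 0 <= weighted_max a w.
Proof.
move=> a_ok; apply: (big_ind (fun x => 0 <= x)) => // [x y x0 _|j _].
  by rewrite le_max x0.
by rewrite mulr_ge0 ?ler0n ?(nonincreasing_nonneg_ge0 a_ok).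
Qed.

Lemma weighted_max_le_head n a (f : {ffun 'I_n -> bool}) :
  nonincreasing_nonneg n.+1 a -> weighted_max (fun k => a k.+1) f <= a 1%N.
Proof.
move=> a_ok; apply: bigmax_le; first exact: (nonincreasing_nonneg_ge0 a_ok).
move=> j _; rewrite /delta_rv; case: (f j); rewrite ?mul1r ?mul0r.
  by apply: a_ok.1 => //; rewrite ltnS ltn_ord.
exact: (nonincreasing_nonneg_ge0 a_ok).
Qed.

Lemma sqrtln_max_moment_cons n d c a : nonincreasing_nonneg n.+1 a ->
  sqrtln_max_moment n.+1 d c a =
  d * a 1%N * sqrtln_moment n d (c + 1) + (1 - d) * sqrtln_max_moment n d c (fun k => a k.+1).
Proof.
move=> a_ok; rewrite /sqrtln_max_moment bern_expect_cons.
rewrite (eq_bern_expect _ (fun f => a 1%N * Num.sqrt (ln (c + 1 + bern_count R f)))); last first.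
  move=> f; rewrite weighted_max_cons bern_count_cons mul1r max_l ?addrA 1?mulrC //.
  exact: weighted_max_le_head.
rewrite (eq_bern_expect (fun f => Num.sqrt (ln (c + bern_count R (ffcons false f))) *
                                  weighted_max a (ffcons false f))
          (fun f => Num.sqrt (ln (c + bern_count R f)) * weighted_max (fun k => a k.+1) f));
  last first.
  move=> f; rewrite weighted_max_cons bern_count_cons mul0r add0r max_r //.
  exact/weighted_max_ge0/nonincreasing_nonneg_shift.
by rewrite bern_expectZ mulrA.
Qed.

Lemma sqrtln_max_momentE n d c a : nonincreasing_nonneg n a ->
  sqrtln_max_moment n d c a =
  \sum_(j < n) d * (1 - d) ^+ j * a j.+1 * sqrtln_moment (n - j.+1) d (c + 1).
Proof.
elim: n a => [|n IHn] a a_ok.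
  rewrite big_ord0 /sqrtln_max_moment (eq_bern_expect _ (fun _ => 0)) ?bern_expect_cst //.
  by move=> w; rewrite /weighted_max big_ord0 mulr0.
rewrite sqrtln_max_moment_cons // IHn; last exact: nonincreasing_nonneg_shift.
rewrite big_ord_recl /= expr0 mulr1 subn1; congr (_ + _).
by rewrite mulr_sumr; apply: eq_bigr => j _; rewrite subSS exprS; ring.
Qed.

(* Since a is nonincreasing, the tail from m on is at most q^m <= 1/2 times the whole sum. *)
Lemma geometric_weighted_sum_le n m (q : R) a :
  nonincreasing_nonneg n a -> (m <= n)%N -> 0 <= q -> q <= 1 -> q ^+ m <= 1 / 2 ->
  \sum_(j < n) q ^+ j * a j.+1 <= 2 * \sum_(j < m) a j.+1.
Proof.
move=> a_ok mn q0 q1 qm.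
have a0 j : (j < n)%N -> 0 <= a j.+1 by apply: nonincreasing_nonneg_ge0.
set T := \sum_(j < n) q ^+ j * a j.+1.
have T0 : 0 <= T by apply: sumr_ge0 => j _; rewrite mulr_ge0 ?exprn_ge0 ?a0.
have T_split : T = \sum_(j < m) q ^+ j * a j.+1 + \sum_(m <= j < n) q ^+ j * a j.+1.
  exact: (big_ord_split_nat (fun j => q ^+ j * a j.+1)).
have head_le : \sum_(j < m) q ^+ j * a j.+1 <= \sum_(j < m) a j.+1.
  apply: ler_sum => j _; rewrite ler_piMl ?exprn_ile1 //.
  exact/a0/(leq_trans (ltn_ord j)).
have tail_le : \sum_(m <= j < n) q ^+ j * a j.+1 <= q ^+ m * T.
  rewrite -{1}(add0n m) big_addn.
  apply: (@le_trans _ _ (\sum_(0 <= i < n - m) q ^+ m * (q ^+ i * a i.+1))).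
    apply: ler_sum_nat => i /andP [_ i_lt].
    rewrite addnC exprD -mulrA; do 2 (apply: ler_wpM2l; first exact: exprn_ge0).
    by apply: a_ok.1; rewrite ?ltnS ?leq_addl //; move: i_lt mn; clear; lia.
  rewrite -mulr_sumr ler_wpM2l ?exprn_ge0 // big_mkord.
  rewrite /T (big_ord_split_nat (fun j => q ^+ j * a j.+1) (leq_subr m n)) /= lerDl.
  rewrite big_nat_cond; apply: sumr_ge0 => i /andP [/andP [_ /a0 ai0] _].
  by rewrite mulr_ge0 ?exprn_ge0.
have := exprn_ge0 m q0; nra.
Qed.

End FirstSuccessDecomposition.

Section RealBounds.
Variable R : realType.

Lemma ln_le_subr1 (x : R) : 0 < x -> ln x <= x - 1.
Proof. by move=> x0; have := @le_ln1Dx R (x - 1); rewrite subrKC; apply; lra. Qed.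

Lemma expR1_ge2 : 2 <= expR (1 : R).
Proof. by have := expR_ge1Dx (1 : R); lra. Qed.

Lemma expR1_le4 : expR (1 : R) <= 4.
Proof.
(* e^(1/2) = 1 / e^(-1/2) <= 1 / (1 - 1/2) *)
have e_half_inv := expRxMexpNx_1 (1 / 2 : R).
have e_neg_half_ge := expR_ge1Dx (- (1 / 2) : R).
have e_half_gt0 := expR_gt0 (1 / 2 : R).
have e_half_le2 : expR (1 / 2 : R) <= 2 by nra.
have -> : (1 : R) = 1 / 2 + 1 / 2 by field.
by rewrite expRD; nra.
Qed.

Lemma invr_le_half (u : R) : 2 <= u -> u^-1 <= 1 / 2.
Proof. by move=> u2; rewrite mul1r lef_pV2 ?posrE //; lra. Qed.

Lemma sqrtr_le_2sqrtr (u v : R) : 0 <= v -> u <= 4 * v -> Num.sqrt u <= 2 * Num.sqrt v.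
Proof.
move=> v0 uv; have -> : 2 * Num.sqrt v = Num.sqrt (4 * v).
  rewrite sqrtrM; last lra.
  have -> : (4 : R) = 2 ^+ 2 by rewrite expr2; lra.
  by rewrite sqrtr_sqr ger0_norm.
exact: ler_wsqrtr.
Qed.

(* The tangent line of the concave function t |-> sqrt t at ln y0, combined with
   ln y <= ln y0 + y / y0 - 1. *)
Lemma sqrt_ln_le_tangent (y y0 : R) : 1 <= y -> 1 < y0 ->
  Num.sqrt (ln y) <= (2 * ln y0 + y / y0 - 1) / (2 * Num.sqrt (ln y0)).
Proof.
move=> y1 y01.
have t0 : 0 < Num.sqrt (ln y0) by rewrite sqrtr_gt0 ln_gt0.
have ln_le : ln y - ln y0 <= y / y0 - 1.
  by rewrite -ln_div ?posrE; [apply: ln_le_subr1; apply: divr_gt0|..]; lra.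
rewrite ler_pdivlMr ?mulr_gt0 //.
have s_sq : Num.sqrt (ln y) ^+ 2 = ln y by rewrite sqr_sqrtr // ln_ge0.
have t_sq : Num.sqrt (ln y0) ^+ 2 = ln y0 by rewrite sqr_sqrtr // ltW // ln_gt0.
have s0 := sqrtr_ge0 (ln y).
set s := Num.sqrt (ln y) in s_sq s0 *; set t := Num.sqrt (ln y0) in t_sq t0 *.
rewrite -s_sq -t_sq in ln_le *.
have := sqr_ge0 (s - t); rewrite !expr2 in ln_le *; nra.
Qed.

Lemma sqrt_ln_shift_le (x : R) : 2 < x ->
  Num.sqrt (ln (expR 1 + 1 + x)) <= 2 * Num.sqrt (ln x).
Proof.
move=> x2; apply: sqrtr_le_2sqrtr; first by apply: ln_ge0; lra.
have -> : 4 * ln x = ln (x ^+ 4) by rewrite lnXn ?mulr_natl //; lra.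
rewrite ler_ln ?posrE ?exprn_gt0; [|have := expR_gt0 (1 : R); lra|lra|lra].
have x2_ge4 : 4 <= x ^+ 2 by rewrite expr2; nra.
have -> : x ^+ 4 = x ^+ 2 * x ^+ 2 by rewrite -exprD.
have := expR1_le4; nra.
Qed.

(* Below the cut N <= s the left-hand side is nonpositive; above it, monotonicity. *)
Lemma sqrt_ln_ge_cutoff (c s N : R) : 0 < c -> 0 <= s -> 0 <= N ->
  Num.sqrt (ln (c + s)) * (1 - expR (s - N)) <= Num.sqrt (ln (c + N)).
Proof.
move=> c0 s0 N0; have [sN|Ns] := leP s N.
  apply: le_trans (_ : Num.sqrt (ln (c + s)) <= _).
    by rewrite ler_piMr ?sqrtr_ge0 // gerBl expR_ge0.
  by apply: ler_wsqrtr; rewrite ler_ln ?posrE; lra.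
apply: le_trans (sqrtr_ge0 _); rewrite mulr_ge0_le0 ?sqrtr_ge0 // subr_le0.
by have := expR_ge1Dx (s - N); lra.
Qed.

Section GeometricWeights.
Variables (d : R) (m : nat).
Hypotheses (d_gt0 : 0 < d) (d_le1 : d <= 1) (dm1 : d * m%:R = 1).

Lemma subr_expn_le_half : (1 - d) ^+ m <= 1 / 2.
Proof.
apply: (@le_trans _ _ (expR (- d) ^+ m)).
  apply: lerXn2r; rewrite ?nnegrE ?expR_ge0 ?subr_ge0 //.
  by have := expR_ge1Dx (- d); lra.
by rewrite -expRM_natr mulNr dm1 expRN invr_le_half ?expR1_ge2.
Qed.

Lemma expRN1_le_subr_expn j : (j < m)%N -> expR (-1) <= (1 - d) ^+ j.
Proof.
case: j => [_|j jm]; first by rewrite expr0 expR_le1; lra.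
have m2 : (2 : R) <= m%:R by rewrite ler_nat (leq_trans _ jm).
have q_gt0 : 0 < 1 - d.
  have : d * 2 <= 1 by rewrite -[leRHS]dm1 ler_pM2l.
  lra.
set q := 1 - d in q_gt0 *.
have m_succ : m%:R = m.-1%:R + 1 :> R by rewrite natr1 prednK // (leq_trans _ jm).
have dm1q : d * m.-1%:R = q by move: dm1; rewrite m_succ mulrDr mulr1 /q; lra.
have q_ge : expR (- (d / q)) <= q.
  rewrite expRN -[leRHS]invrK lef_pV2 ?posrE ?invr_gt0 ?expR_gt0 //.
  rewrite [leLHS](_ : _ = 1 + d / q) ?expR_ge1Dx //.
  by rewrite /q; field; exact: lt0r_neq0.
apply: (@le_trans _ _ (q ^+ m.-1)).
  apply: (@le_trans _ _ (expR (- (d / q)) ^+ m.-1)); last first.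
    by apply: lerXn2r => //; rewrite nnegrE ?expR_ge0 // ltW.
  by rewrite -expRM_natr mulNr mulrAC dm1q divff ?gt_eqF.
apply: ler_wiXn2l; [exact: ltW|by rewrite /q gerBl ltW|].
by rewrite -ltnS prednK // (leq_trans _ jm).
Qed.

End GeometricWeights.
End RealBounds.

Section SqrtLnMomentBounds.
Variables (R : realType) (d : R).
Hypotheses (d_ge0 : 0 <= d) (d_le1 : d <= 1).

Lemma sqrtln_moment_ge0 k c : 0 <= sqrtln_moment k d c.
Proof. by rewrite -(bern_expect_cst d k 0); apply: ler_bern_expect. Qed.

(* Jensen's inequality for the concave function sqrt o ln, via its tangent at y0 := c + E N. *)
Lemma sqrtln_moment_le k c : 2 <= c -> sqrtln_moment k d c <= Num.sqrt (ln (c + d * k%:R)).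
Proof.
move=> c2; have dk0 : 0 <= d * k%:R by rewrite mulr_ge0.
set y0 := c + d * k%:R; have y0_gt1 : 1 < y0 by rewrite /y0; lra.
set t := Num.sqrt (ln y0).
have t_gt0 : 0 < t by rewrite sqrtr_gt0 ln_gt0.
have t_sq : ln y0 = t * t by rewrite -expr2 sqr_sqrtr // ltW // ln_gt0.
have tangent (w : {ffun 'I_k -> bool}) : Num.sqrt (ln (c + bern_count R w)) <=
    (2 * ln y0 + c / y0 - 1) / (2 * t) + (y0 * (2 * t))^-1 * bern_count R w.
  rewrite [leRHS](_ : _ = (2 * ln y0 + (c + bern_count R w) / y0 - 1) / (2 * t)).
    by apply: sqrt_ln_le_tangent y0_gt1; have := bern_count_ge0 R w; lra.
  by field; rewrite (gt_eqF t_gt0) gt_eqF //; lra.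
apply: le_trans (ler_bern_expect d_ge0 d_le1 tangent) _.
rewrite bern_expectD bern_expect_cst bern_expectZ bern_expect_count t_sq.
clearbody t; rewrite le_eqVlt; apply/orP; left; apply/eqP.
by rewrite /y0; field; rewrite (gt_eqF t_gt0) gt_eqF //; lra.
Qed.

Lemma sqrtln_moment_ge1 k : 1 <= sqrtln_moment k d (expR 1 + 1).
Proof.
rewrite -[leLHS](bern_expect_cst d k); apply: ler_bern_expect => // w.
have N0 := bern_count_ge0 R w; have e2 := expR1_ge2 R.
rewrite -[leLHS]sqrtr1; apply: ler_wsqrtr.
by rewrite -[leLHS](expRK 1) ler_ln ?posrE ?expR_gt0 //; lra.
Qed.

Lemma bern_mgfN1_le k : (1 - d + d * expR (-1)) ^+ k <= expR (- (d * k%:R / 2)).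
Proof.
have eN1 : expR (-1) <= 1 / 2 :> R by rewrite expRN invr_le_half ?expR1_ge2.
have base_le : 1 - d + d * expR (-1) <= expR (- (d / 2)).
  apply: le_trans (expR_ge1Dx _).
  have : d * expR (-1) <= d * (1 / 2) by rewrite ler_wpM2l.
  lra.
rewrite (_ : - (d * k%:R / 2) = - (d / 2) * k%:R); last by field.
rewrite expRM_natr; apply: lerXn2r => //.
- by rewrite nnegrE addr_ge0 ?subr_ge0 ?mulr_ge0 ?expR_ge0.
- by rewrite nnegrE expR_ge0.
Qed.

(* Chernoff-type: for s := d k / 4 >= 1, E exp (s - N) <= exp (s - d k / 2) = exp (- s) <= 1/2,
   so the cut-off bound of [sqrt_ln_ge_cutoff] loses at most half in expectation. *)
Lemma sqrtln_moment_ge_half k : 4 <= d * k%:R ->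
  Num.sqrt (ln (expR 1 + 1 + d * k%:R / 4)) / 2 <= sqrtln_moment k d (expR 1 + 1).
Proof.
move=> dk4; have e2 := expR1_ge2 R.
set s := d * k%:R / 4; set A := Num.sqrt (ln (expR 1 + 1 + s)).
(* Stated in the shape A * 1 + c * X so that linearity of the expectation applies as is. *)
have cutoff (w : {ffun 'I_k -> bool}) : A * 1 + (- (A * expR s)) * expR (- bern_count R w)
                <= Num.sqrt (ln (expR 1 + 1 + bern_count R w)).
  rewrite mulNr -mulrA -expRD -mulrBr.
  by apply: sqrt_ln_ge_cutoff (bern_count_ge0 R w); rewrite /s; lra.
apply: le_trans (ler_bern_expect d_ge0 d_le1 cutoff).
rewrite bern_expectD bern_expect_cst bern_expectZ bern_expect_expNcount.
have small : expR s * (1 - d + d * expR (-1)) ^+ k <= 1 / 2.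
  apply: le_trans (_ : expR s * expR (- (d * k%:R / 2)) <= 1 / 2).
    by rewrite ler_wpM2l ?expR_ge0 ?bern_mgfN1_le.
  rewrite -expRD (_ : s + _ = - s); last by rewrite /s; field.
  by rewrite expRN invr_le_half //; apply: le_trans (expR_ge1Dx _); rewrite /s; lra.
have := sqrtr_ge0 (ln (expR 1 + 1 + s)); rewrite -/A; nra.
Qed.

Lemma sqrtln_moment_ge_quarter k (x : R) : 2 < x -> x - 1 <= d * k%:R ->
  Num.sqrt (ln x) / 4 <= sqrtln_moment k d (expR 1 + 1).
Proof.
move=> x2 xk; have e2 := expR1_ge2 R.
have [x5|x5] := leP x 5.
  apply: le_trans (sqrtln_moment_ge1 k).
  have : Num.sqrt (ln x) <= 2 * Num.sqrt 1.
    by apply: sqrtr_le_2sqrtr; have := ln_le_subr1 (_ : 0 < x); lra.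
  by rewrite sqrtr1; lra.
apply: le_trans (sqrtln_moment_ge_half _); last lra.
set y := expR 1 + 1 + d * k%:R / 4.
have y1 : 1 + d * k%:R / 4 <= y by rewrite /y; lra.
have y2_ge : 1 + d * k%:R / 2 <= y ^+ 2 by rewrite expr2; nra.
have y4_ge : x <= y ^+ 4.
  have -> : y ^+ 4 = y ^+ 2 * y ^+ 2 by rewrite -exprD.
  nra.
have : Num.sqrt (ln x) <= 2 * Num.sqrt (ln y).
  apply: sqrtr_le_2sqrtr; first by apply: ln_ge0; lra.
  have -> : 4 * ln y = ln (y ^+ 4) by rewrite lnXn ?mulr_natl //; lra.
  by rewrite ler_ln ?posrE ?exprn_gt0 //; lra.
lra.
Qed.

End SqrtLnMomentBounds.

Section FirstSuccessBounds.
Variables (R : realType) (n m : nat) (d : R) (a : nat -> R).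
Hypotheses (a_ok : nonincreasing_nonneg n a) (d_gt0 : 0 < d) (d_le1 : d <= 1)
  (dm1 : d * m%:R = 1) (mn : (m <= n)%N) (dn_gt2 : 2 < d * n%:R).

Let a_ge0 j : (j < n)%N -> 0 <= a j.+1.
Proof. exact: nonincreasing_nonneg_ge0. Qed.

Lemma sqrtln_max_moment_ge :
  d / (4 * expR 1) * Num.sqrt (ln (d * n%:R)) * \sum_(j < m) a j.+1 <=
  sqrtln_max_moment n d (expR 1) a.
Proof.
set s := Num.sqrt (ln (d * n%:R)); have d0 := ltW d_gt0.
rewrite sqrtln_max_momentE // -[leLHS]addr0.
rewrite (big_ord_split_nat (fun j => d * (1 - d) ^+ j * a j.+1 *
                                     sqrtln_moment (n - j.+1) d (expR 1 + 1)) mn).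
apply: lerD; last first.
  rewrite big_nat_cond; apply: sumr_ge0 => j /andP [/andP [_ /a_ge0 aj0] _].
  have q0 : 0 <= 1 - d by rewrite subr_ge0.
  by rewrite !mulr_ge0 ?exprn_ge0 ?sqrtln_moment_ge0.
rewrite mulr_sumr; apply: ler_sum => j _.
have aj0 : 0 <= a j.+1 by apply: a_ge0; exact: leq_trans (ltn_ord j) mn.
rewrite (_ : _ * _ = d * expR (-1) * a j.+1 * (s / 4)); last first.
  by rewrite expRN; field; rewrite gt_eqF ?expR_gt0.
apply: ler_pM; rewrite ?mulr_ge0 ?expR_ge0 ?sqrtr_ge0 ?invr_ge0 //.
  apply: ler_wpM2r => //; apply: ler_wpM2l => //.
  by have := expRN1_le_subr_expn d_gt0 dm1 (ltn_ord j).
apply: sqrtln_moment_ge_quarter => //.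
rewrite -[X in _ - X <= _]dm1 -mulrBr -natrB //.
by apply: ler_wpM2l => //; rewrite ler_nat leq_sub2l.
Qed.

Lemma sqrtln_max_moment_le :
  sqrtln_max_moment n d (expR 1) a <=
  4 * d * Num.sqrt (ln (d * n%:R)) * \sum_(j < m) a j.+1.
Proof.
set s := Num.sqrt (ln (d * n%:R)); have d0 := ltW d_gt0.
have q0 : 0 <= 1 - d by rewrite subr_ge0.
have G_le j : sqrtln_moment (n - j.+1) d (expR 1 + 1) <= 2 * s.
  have c2 : 2 <= expR 1 + 1 :> R by have := expR1_ge2 R; lra.
  apply: le_trans (sqrtln_moment_le d0 d_le1 _ c2) (le_trans _ (sqrt_ln_shift_le dn_gt2)).
  apply: ler_wsqrtr; have e0 := expR_gt0 (1 : R).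
  have dk0 : 0 <= d * (n - j.+1)%:R by rewrite mulr_ge0.
  have dk_le : d * (n - j.+1)%:R <= d * n%:R.
    by apply: ler_wpM2l => //; rewrite ler_nat leq_subr.
  by rewrite ler_ln ?posrE; lra.
rewrite sqrtln_max_momentE //.
apply: (@le_trans _ _ (\sum_(j < n) 2 * d * s * ((1 - d) ^+ j * a j.+1))).
  apply: ler_sum => j _.
  rewrite (_ : 2 * d * s * _ = d * (1 - d) ^+ j * a j.+1 * (2 * s)); last by ring.
  by apply: ler_wpM2l; rewrite ?mulr_ge0 ?exprn_ge0 ?a_ge0.
rewrite -mulr_sumr (_ : 4 * d * s * _ = 2 * d * s * (2 * \sum_(j < m) a j.+1)); last by ring.
apply: ler_wpM2l; first by rewrite !mulr_ge0 ?sqrtr_ge0.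
apply: geometric_weighted_sum_le => //; first by rewrite gerBl.
exact: subr_expn_le_half.
Qed.

End FirstSuccessBounds.

Theorem lemma5p1 (R : realType) (n : nat) (a : nat -> R) (d : R) (m : nat)
  (ha_mono : forall j k : nat, (1 <= j)%N -> (j <= k)%N -> (k <= n)%N -> a k <= a j)
  (ha_nonneg : 0 <= a n)
  (hd_low : 2 / n%:R < d) (hd_up : d <= 1)
  (hm : d^-1 = m%:R) :
  let nd := fun w : {ffun 'I_n -> bool} => expR 1 + \sum_(j < n) delta_rv w j in
  let S := \sum_(1 <= j < m.+1) a j in
  let E := bern_expect d (fun w => Num.sqrt (ln (nd w)) *
             \big[Num.max/0]_(j < n) (delta_rv w j * a j.+1)) in
  d / (4 * expR 1) * Num.sqrt (ln (d * n%:R)) * S <= E /\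
  E <= 4 * d * Num.sqrt (ln (d * n%:R)) * S.
Proof.
move=> nd S E.
have a_ok : nonincreasing_nonneg n a by [].
have -> : E = sqrtln_max_moment n d (expR 1) a by [].
have -> : S = \sum_(j < m) a j.+1 by rewrite /S big_add1 big_mkord.
have d_gt0 : 0 < d by apply: le_lt_trans hd_low; rewrite divr_ge0 ?ler0n.
have dm1 : d * m%:R = 1 by rewrite -hm mulfV ?gt_eqF.
have [n0|n_gt0] := posnP n.
  subst n; rewrite sqrtln_max_momentE // big_ord0 mulr0 ln0 // sqrtr0 !mulr0 !mul0r.
  by split.
have dn_gt2 : 2 < d * n%:R by rewrite -ltr_pdivrMr ?ltr0n.
have mn : (m <= n)%N.
  by rewrite -(ler_nat R) -(ler_pM2l d_gt0); apply: ltW; lra.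
split; [exact: sqrtln_max_moment_ge | exact: sqrtln_max_moment_le].
Qed.
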